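(* Let $v$ be an arbitrary nonempty word of length $m$ whose letters are positive integers (repetitions allowed), and let $n\ge m$. Then the map ${\bf F}_3$ defined below restricts to a bijection of $\mathrm{Sh}(0^{n-m}v)$ onto itself, and for every $w\in\mathrm{Sh}(0^{n-m}v)$: $$\mathrm{maj}\,w=\mathrm{mafz}\,{\bf F}_3(w),$$ and the last (rightmost) letter of $w$ equals the last letter of ${\bf F}_3(w)$.
   Context: Words have nonnegative integer letters. For $w=x_1\cdots x_n$: $\mathrm{DES}\,w=\{i:1\le i\le n-1,\ x_i>x_{i+1}\}$, $\mathrm{maj}\,w=\sum_{i\in\mathrm{DES}\,w}i$; $\mathrm{Zero}\,w=\{i:x_i=0\}$, $\mathrm{zero}\,w=\#\mathrm{Zero}\,w$; $\mathrm{Pos}\,w$ is the subword of positive letters. $\mathrm{mafz}\,w=\sum_{i\in\mathrm{Zero}\,w}i-\sum_{i=1}^{\mathrm{zero}\,w}i+\mathrm{maj}\,\mathrm{Pos}\,w$. For a word $v$ of positive integers of length $m\le n$, $\mathrm{Sh}(0^{n-m}v)$ is the set of words of length $n$ with exactly $n-m$ zeros and with $\mathrm{Pos}\,w=v$. The map ${\bf F}_3$ on all finite words with nonnegative letters is defined by induction on the length $n$. If $n\le1$, or if all letters of $w$ other than the last are $0$, then ${\bf F}_3(w)=w$. Otherwise write uniquely $w=w'a0^rb$, where $a\ge1$ is the rightmost positive letter among the first $n-1$ letters, $r\ge0$, $b\ge0$ is the last letter, and $w'$ is a (possibly empty) word. (1) If $a\le b$: ${\bf F}_3(w)={\bf F}_3(w'a0^r)\,b$.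 (2) If $a>b$ and $r\ge1$: write ${\bf F}_3(w'a0^r)=w''c$ with $c$ a letter; then ${\bf F}_3(w)=0\,w''\,b$ (i.e. add a $0$ on the left, delete the rightmost letter, which is a $0$, and append $b$). (3) If $a>b$ and $r=0$: write ${\bf F}_3(w'a)=0^{m_1}x_1v_10^{m_2}x_2v_2\cdots0^{m_k}x_kv_k$ with $m_1\ge0$, $m_2,\dots,m_k\ge1$, $x_1,\dots,x_k$ positive letters and $v_1,\dots,v_k$ (possibly empty) words of positive letters; let $\delta({\bf F}_3(w'a))=x_10^{m_1}v_1x_20^{m_2}v_2\cdots x_k0^{m_k}v_k$, and set ${\bf F}_3(w)=\delta({\bf F}_3(w'a))\,b$. *)

From mathcomp Require Import all_boot.
Set Implicit Arguments. Unset Strict Implicit. Unset Printing Implicit Defensive.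

(* Words are seq nat; positions are 1-based as in the paper. *)

Definition maj (w : seq nat) : nat :=
  \sum_(0 <= i < (size w).-1 | nth 0 w i > nth 0 w i.+1) i.+1.

Definition zero (w : seq nat) : nat := count (pred1 0) w.

Definition Pos (w : seq nat) : seq nat := filter (fun x => 0 < x) w.

Definition mafz (w : seq nat) : nat :=
  (\sum_(0 <= i < size w | nth 0 w i == 0) i.+1)
  - (\sum_(1 <= i < (zero w).+1) i) + maj (Pos w).

Definition Sh (n : nat) (v : seq nat) : pred (seq nat) :=
  fun w => [&& size w == n, zero w == n - size v & Pos w == v].

(* delta (0^{m1} x1 v1 0^{m2} x2 v2 ...) = x1 0^{m1} v1 x2 0^{m2} v2 ...
   (z counts the pending run of zeros) *)
Fixpoint delta_aux (z : nat) (s : seq nat) : seq nat :=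
  match s with
  | [::] => nseq z 0
  | x :: s' => if x == 0 then delta_aux z.+1 s'
               else x :: nseq z 0 ++ delta_aux 0 s'
  end.
Definition delta (s : seq nat) : seq nat := delta_aux 0 s.

(* F3_step u fu b = F3 (rcons u b), given fu = F3 u. *)
Definition F3_step (u fu : seq nat) (b : nat) : seq nat :=
  if all (pred1 0) u then rcons u b
  else
    let r := find (fun x => x != 0) (rev u) in  (* trailing zeros of u *)
    let a := nth 0 (rev u) r in                  (* rightmost positive letter *)
    if a <= b then rcons fu b
    else if 0 < r then rcons (0 :: take (size fu).-1 fu) b
    else rcons (delta fu) b.

Fixpoint F3_rev (rw : seq nat) : seq nat :=
  match rw with
  | [::] => [::]
  | b :: ru => F3_step (rev ru) (F3_rev ru) b
  end.
Definition F3 (w : seq nat) : seq nat := F3_rev (rev w).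

(* Each F3 (rcons u b) ends with b and is obtained from F3 u by a move that
   keeps the zero count and the positive subword: appending b, rotating the
   final 0 of F3 u to the front (rotr 1), or applying delta.  With Z(w) the sum
   of the positions of the zeros of w, the identity
     maj w + (1 + ... + zero w) = Z(F3 w) + maj (Pos w)
   survives each step: when b is smaller than the last positive letter of u,
   Pos w gets a final descent worth |Pos u| (or, for b = 0, Z gets the new
   position |u| + 1 = (zero u + 1) + |Pos u|); the rotation pays for it by
   lowering Z by |Pos u|, while under delta the word w itself gets the descent
   |u| = zero u + |Pos u| and Z grows by zero u.  The move is read off the
   image (a rotated word starts with 0, a word in the image of delta with a
   positive letter) and delta has a left inverse on words ending with a
   positive letter, so F3 is injective; Sh n v is finite (its words are
   permutations of 0^(n-m) v), hence F3 is onto it. *)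

From mathcomp Require Import all_boot zify.
Set Implicit Arguments. Unset Strict Implicit. Unset Printing Implicit Defensive.

Lemma zero_cat s t : zero (s ++ t) = zero s + zero t.
Proof. by rewrite /zero count_cat. Qed.

Lemma zero_rcons s x : zero (rcons s x) = zero s + (x == 0).
Proof. by rewrite -cats1 zero_cat /zero /= addn0. Qed.

Lemma zero_nseq k : zero (nseq k 0) = k.
Proof. by rewrite /zero count_nseq mul1n. Qed.

Lemma Pos_cat s t : Pos (s ++ t) = Pos s ++ Pos t.
Proof. exact: filter_cat. Qed.

Lemma Pos_rcons s x : Pos (rcons s x) = if 0 < x then rcons (Pos s) x else Pos s.
Proof. exact: filter_rcons. Qed.

Lemma Pos_nseq k : Pos (nseq k 0) = [::].
Proof. by rewrite /Pos filter_nseq mul0n. Qed.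

Lemma size_zero_Pos s : size s = zero s + size (Pos s).
Proof.
rewrite /zero /Pos size_filter -(count_predC (pred1 0) s).
by congr (_ + _); apply: eq_count => -[].
Qed.

Lemma Pos_nilP s : reflect (s = nseq (size s) 0) (Pos s == [::]).
Proof.
apply: (iffP eqP) => [Ps0|->]; last exact: Pos_nseq.
apply/all_pred1P/allP => x xs; apply: contraT => x0.
have : x \in Pos s by rewrite mem_filter lt0n x0 xs.
by rewrite Ps0.
Qed.

Lemma perm_zeros_Pos s : perm_eq (nseq (zero s) 0 ++ Pos s) s.
Proof.
have -> : nseq (zero s) 0 = filter (pred1 0) s.
  by rewrite /zero -size_filter; apply/esym/all_pred1P; apply: filter_all.
have -> : Pos s = filter (predC (pred1 0)) s by apply: eq_filter => -[].
by rewrite perm_filterC.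
Qed.

Lemma last_Pos_gt0 s : (0 < last 0 (Pos s)) = (Pos s != [::]).
Proof.
have : all (fun x => 0 < x) (Pos s) by apply: filter_all.
by case: (Pos s) => [|y t] // /allP posPs; apply/posPs/mem_last.
Qed.

Lemma last_le_last_Pos s : last 0 s <= last 0 (Pos s).
Proof. by case/lastP: s => [|s [|x]]; rewrite ?Pos_rcons ?last_rcons. Qed.

Lemma last_Pos_last s : 0 < last 0 s -> last 0 (Pos s) = last 0 s.
Proof. by case/lastP: s => [|s [|x]]; rewrite ?Pos_rcons ?last_rcons. Qed.

Lemma head_rotr1 (T : Type) (x0 : T) s : head x0 (rotr 1 s) = last x0 s.
Proof. by case/lastP: s => // s x; rewrite rotr1_rcons last_rcons. Qed.

Lemma maj_rcons s b : maj (rcons s b) = maj s + (b < last 0 s) * size s.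
Proof.
case: s => [|y s]; first by rewrite /maj !big_geq.
rewrite /maj size_rcons /= big_mkcond big_nat_recr //= -big_mkcond /=.
congr (_ + _).
  apply: congr_big_nat => // i /andP [_ ltis].
  by rewrite -rcons_cons !nth_rcons /= ltis ltnS (ltnW ltis).
rewrite -rcons_cons !nth_rcons /= ltnn eqxx ltnSn (last_nth 0).
by case: ifP; rewrite ?mul1n.
Qed.

Lemma maj_nseq0 k : maj (nseq k 0) = 0.
Proof. by rewrite /maj big1 // => i; rewrite !nth_nseq !if_same. Qed.

Fixpoint sum_zero_pos (s : seq nat) : nat :=
  if s is x :: s' then (x == 0) + sum_zero_pos s' + zero s' else 0.

Definition triangular (z : nat) : nat := \sum_(1 <= i < z.+1) i.

Lemma triangularS z : triangular z.+1 = triangular z + z.+1.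
Proof. by rewrite /triangular big_nat_recr. Qed.

Lemma sum_zero_pos_cat s t :
  sum_zero_pos (s ++ t) = sum_zero_pos s + sum_zero_pos t + size s * zero t.
Proof. by elim: s => [|x s IHs] /=; rewrite ?zero_cat ?IHs; lia. Qed.

Lemma sum_zero_pos_rcons s x :
  sum_zero_pos (rcons s x) = sum_zero_pos s + (x == 0) * (size s).+1.
Proof. by rewrite -cats1 sum_zero_pos_cat /= /zero /=; case: (x == 0); lia. Qed.

Lemma sum_zero_posE s :
  \sum_(0 <= i < size s | nth 0 s i == 0) i.+1 = sum_zero_pos s.
Proof.
elim/last_ind: s => [|s x IHs]; first by rewrite big_geq.
rewrite size_rcons big_mkcond big_nat_recr //= -big_mkcond /= sum_zero_pos_rcons -IHs.
rewrite nth_rcons ltnn eqxx; congr (_ + _); last by case: (x == 0); rewrite ?mul1n.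
by apply: congr_big_nat => // i /andP [_ ltis]; rewrite nth_rcons ltis.
Qed.

Lemma sum_zero_pos_nseq0 k : sum_zero_pos (nseq k 0) = triangular k.
Proof.
elim: k => [|k IHk] /=; first by rewrite /triangular big_geq.
by rewrite IHk zero_nseq triangularS add1n addSnnS.
Qed.

Lemma triangular_zero_le_sum s : triangular (zero s) <= sum_zero_pos s.
Proof.
elim/last_ind: s => [|s x IHs]; first by rewrite /triangular big_geq.
rewrite zero_rcons sum_zero_pos_rcons (size_zero_Pos s).
by case: (x == 0); rewrite /= ?addn0 ?addn1 ?triangularS; lia.
Qed.

Lemma nseqS_cat k (t : seq nat) : nseq k.+1 0 ++ t = nseq k 0 ++ 0 :: t.
Proof. by elim: k => //= k ->. Qed.

Lemma Pos_delta_aux k s : Pos (delta_aux k s) = Pos s.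
Proof.
elim: s k => [|[|x] s IHs] k /=; first exact: Pos_nseq.
  exact: IHs.
by rewrite /Pos /= -!/(Pos _) Pos_cat Pos_nseq IHs.
Qed.

Lemma zero_delta_aux k s : zero (delta_aux k s) = k + zero s.
Proof.
elim: s k => [|[|x] s IHs] k /=; first by rewrite zero_nseq addn0.
  by rewrite IHs /zero /= -/(zero s) addSnnS add1n.
by rewrite /zero /= -!/(zero _) zero_cat zero_nseq IHs.
Qed.

Lemma sum_zero_pos_delta_aux k s : 0 < last 0 s ->
  sum_zero_pos (delta_aux k s) = sum_zero_pos (nseq k 0 ++ s) + k + zero s.
Proof.
elim: s k => [|[|x] s IHs] k //= lasts.
  by rewrite IHs // nseqS_cat /zero /=; lia.
rewrite !sum_zero_pos_cat zero_cat zero_delta_aux /= size_nseq zero_nseq.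
case: s IHs lasts => [|y s] IHs lasts; first by rewrite /zero /=; lia.
by rewrite IHs //= /zero /=; lia.
Qed.

(* undelta_aux x z s undoes delta, x being the pending positive letter and z
   the number of zeros read after it; for the first block the sentinel x = 1
   is used, and removed by behead. *)
Fixpoint undelta_aux (x z : nat) (s : seq nat) : seq nat :=
  match s with
  | [::] => nseq z 0 ++ [:: x]
  | y :: s' => if y == 0 then undelta_aux x z.+1 s'
               else nseq z 0 ++ x :: undelta_aux y 0 s'
  end.

Definition undelta (s : seq nat) : seq nat := behead (undelta_aux 1 0 s).

Lemma undelta_aux_nseq0 x z k t :
  undelta_aux x z (nseq k 0 ++ t) = undelta_aux x (z + k) t.
Proof. by elim: k z => [|k IHk] z /=; rewrite ?addn0 ?IHk ?addSnnS. Qed.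

Lemma undelta_aux_delta_aux x z k s : 0 < last 0 s ->
  undelta_aux x z (delta_aux k s) = nseq z 0 ++ x :: nseq k 0 ++ s.
Proof.
elim: s x z k => [|[|y] s IHs] x z k //= lasts.
  by rewrite IHs // nseqS_cat.
rewrite undelta_aux_nseq0 add0n.
by case: s IHs lasts => [|y' s] IHs lasts //; rewrite IHs.
Qed.

Lemma deltaK s : 0 < last 0 s -> undelta (delta s) = s.
Proof. by move=> lasts; rewrite /undelta /delta undelta_aux_delta_aux. Qed.

Lemma head_delta_aux k s : 0 < last 0 s -> 0 < head 0 (delta_aux k s).
Proof. by elim: s k => [|[|y] s IHs] k //=; apply: IHs. Qed.

Lemma F3_rcons u b : F3 (rcons u b) = F3_step u (F3 u) b.
Proof. by rewrite /F3 rev_rcons /= revK. Qed.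

Lemma F3_rcons_last u b : exists f, F3 (rcons u b) = rcons f b.
Proof. by rewrite F3_rcons /F3_step; repeat case: ifP => _; eexists. Qed.

Lemma last_F3 w : last 0 (F3 w) = last 0 w.
Proof.
by case/lastP: w => // u b; have [f ->] := F3_rcons_last u b; rewrite !last_rcons.
Qed.

Lemma nth_rev_find_neq0 s :
  nth 0 (rev s) (find (fun x => x != 0) (rev s)) = last 0 (Pos s).
Proof.
by elim/last_ind: s => // s [|x] IHs; rewrite rev_rcons Pos_rcons //= last_rcons.
Qed.

Lemma all_pred1_0E s : all (pred1 0) s = (Pos s == [::]).
Proof. by elim: s => // -[|x] s IHs. Qed.

(* The paper's recursion; in case (2), prepending 0 and dropping the final 0
   of F3 u is a rotation. *)
Lemma F3_rconsE u b : F3 (rcons u b) =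
  if Pos u == [::] then rcons u b
  else if last 0 (Pos u) <= b then rcons (F3 u) b
  else if last 0 u == 0 then rcons (rotr 1 (F3 u)) b
  else rcons (delta (F3 u)) b.
Proof.
rewrite F3_rcons /F3_step /= all_pred1_0E nth_rev_find_neq0.
case: (Pos u =P [::]) => // Pu; case: (leqP (last 0 (Pos u)) b) => // _.
case/lastP: u Pu => [|u [|x]] Pu //; rewrite rev_rcons last_rcons //=.
have [f ->] := F3_rcons_last u 0.
by rewrite rotr1_rcons size_rcons -[rcons f 0]cats1 take_size_cat.
Qed.

(* The additive form of maj w = mafz fw, free of truncated subtraction. *)
Definition F3_inv (w fw : seq nat) : Prop :=
  [/\ Pos fw = Pos w, zero fw = zero w &
      maj w + triangular (zero w) = sum_zero_pos fw + maj (Pos w)].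

Lemma F3_inv_rcons u g b : Pos g = Pos u -> zero g = zero u ->
  maj u + (b < last 0 u) * size u + triangular (zero u)
    = sum_zero_pos g + maj (Pos u) + (b < last 0 (Pos u)) * size (Pos u) ->
  F3_inv (rcons u b) (rcons g b).
Proof.
move=> Pg zg eq_maj; rewrite /F3_inv !Pos_rcons !zero_rcons Pg zg.
split=> //; rewrite maj_rcons sum_zero_pos_rcons (size_zero_Pos g) Pg zg.
case: b eq_maj => [|b] /= eq_maj; last by rewrite maj_rcons addn0; lia.
rewrite addn1 triangularS !mul1n; move: eq_maj; rewrite last_Pos_gt0.
by case: (Pos u =P [::]) => [->|_] /=; lia.
Qed.

Section F3_step_invariant.

Variables (u : seq nat) (b : nat).
Hypothesis IHu : F3_inv u (F3 u).

Lemma F3_inv_zeros : Pos u = [::] -> F3_inv (rcons u b) (rcons u b).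
Proof.
move=> Pu; apply: F3_inv_rcons => //.
have := last_le_last_Pos u; rewrite Pu leqn0 => /eqP ->.
move/eqP/Pos_nilP: Pu => ->.
by rewrite maj_nseq0 (maj_nseq0 0) zero_nseq sum_zero_pos_nseq0 ltn0 /= !addn0.
Qed.

Lemma F3_inv_ge : last 0 (Pos u) <= b -> F3_inv (rcons u b) (rcons (F3 u) b).
Proof.
case: IHu => Pf zf eq_maj le_ab; apply: F3_inv_rcons => //.
have le_ub := leq_trans (last_le_last_Pos u) le_ab.
by rewrite ltnNge le_ub ltnNge le_ab !addn0.
Qed.

Lemma F3_inv_rotr : Pos u != [::] -> b < last 0 (Pos u) -> last 0 u = 0 ->
  F3_inv (rcons u b) (rcons (rotr 1 (F3 u)) b).
Proof.
case: IHu => Pf zf eq_maj /eqP Pu lt_ba lu0.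
have [f Ef] : exists f, F3 u = rcons f 0.
  case/lastP E: (F3 u) => [|f c]; first by case: Pu; rewrite -Pf E.
  by exists f; move: (last_F3 u); rewrite E last_rcons lu0 => ->.
move: Pf zf eq_maj; rewrite Ef Pos_rcons zero_rcons sum_zero_pos_rcons /=.
move=> Pf zf eq_maj; rewrite rotr1_rcons.
apply: F3_inv_rcons; rewrite ?lu0 ?lt_ba //=; first by rewrite addnC.
by move: eq_maj; rewrite (size_zero_Pos f) Pf; lia.
Qed.

Lemma F3_inv_delta : b < last 0 (Pos u) -> 0 < last 0 u ->
  F3_inv (rcons u b) (rcons (delta (F3 u)) b).
Proof.
case: IHu => Pf zf eq_maj lt_ba lu.
have lfu : 0 < last 0 (F3 u) by rewrite last_F3.
apply: F3_inv_rcons; rewrite /delta ?Pos_delta_aux ?zero_delta_aux //.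
rewrite sum_zero_pos_delta_aux // -(last_Pos_last lu) lt_ba (size_zero_Pos u) /=.
by rewrite zf; lia.
Qed.

End F3_step_invariant.

Lemma F3_invariant w : F3_inv w (F3 w).
Proof.
elim/last_ind: w => [|u b IHu].
  by split => //; rewrite /triangular big_geq //= addn0.
rewrite F3_rconsE; case: (Pos u =P [::]) => [|/eqP] Pu; first exact: F3_inv_zeros.
case: (leqP (last 0 (Pos u)) b) => [le_ab|lt_ba]; first exact: F3_inv_ge.
case: (posnP (last 0 u)) => lu; first exact: F3_inv_rotr.
exact: F3_inv_delta.
Qed.

Lemma Pos_F3 w : Pos (F3 w) = Pos w.
Proof. by case: (F3_invariant w) => Pf _ _; apply: Pf. Qed.

Lemma zero_F3 w : zero (F3 w) = zero w.
Proof. by case: (F3_invariant w) => _ zf _; apply: zf. Qed.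

Lemma size_F3 w : size (F3 w) = size w.
Proof. by rewrite [LHS]size_zero_Pos Pos_F3 zero_F3 -size_zero_Pos. Qed.

Lemma maj_mafz_F3 w : maj w = mafz (F3 w).
Proof.
case: (F3_invariant w) => Pf zf eq_maj.
rewrite /mafz sum_zero_posE Pf zf -/(triangular _).
by move: (triangular_zero_le_sum (F3 w)); rewrite zf; lia.
Qed.

Lemma rotr1_neq_delta s t : last 0 s = 0 -> 0 < last 0 t -> rotr 1 s <> delta t.
Proof.
move=> ls lt /(congr1 (head 0)); rewrite head_rotr1 ls /delta => h0.
by move: (head_delta_aux 0 lt); rewrite -h0.
Qed.

Lemma F3_inj : injective F3.
Proof.
elim/last_ind => [|u1 b IHu] w2; case/lastP: w2 => [|u2 b2] E; first by [].
1,2: by move: (congr1 size E); rewrite !size_F3 size_rcons.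
have eq_b : b = b2 by move: (congr1 (last 0) E); rewrite !last_F3 !last_rcons.
subst b2; have eq_Pos : Pos u1 = Pos u2.
  move: (congr1 Pos E); rewrite !Pos_F3 !Pos_rcons.
  by case: (0 < b) => // /rcons_inj [].
move: E; rewrite !F3_rconsE eq_Pos; case: (Pos u2 =P [::]) => [_|_].
  by move/rcons_inj => [->].
case: (leqP (last 0 (Pos u2)) b) => _; first by move/rcons_inj => [] /IHu ->.
case: (posnP (last 0 u1)) => l1; case: (posnP (last 0 u2)) => l2 /rcons_inj [] E.
- by rewrite (IHu u2) // (rotr_inj E).
- by exfalso; apply: (rotr1_neq_delta _ _ E); rewrite last_F3.
- by exfalso; apply: (rotr1_neq_delta _ _ (esym E)); rewrite last_F3.
- have lf1 : 0 < last 0 (F3 u1) by rewrite last_F3.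
  by rewrite (IHu u2) // -(deltaK lf1) E deltaK // last_F3.
Qed.

Lemma inj_in_onto (T : eqType) (P : pred T) (s : seq T) (f : T -> T) :
  {subset P <= s} -> {in P, forall x, P (f x)} -> {in P &, injective f} ->
  {in P, forall y, exists2 x, P x & f x = y}.
Proof.
move=> sPs fP f_inj y Py; set L := filter P (undup s).
have memL x : (x \in L) = P x.
  by rewrite mem_filter mem_undup; case Px: (P x) => //=; apply: sPs.
have uniq_fL : uniq (map f L).
  rewrite map_inj_in_uniq ?filter_uniq ?undup_uniq // => x z.
  by rewrite !memL; apply: f_inj.
have sub_fL : {subset map f L <= L}.
  by move=> _ /mapP [x Lx ->]; rewrite memL; rewrite memL in Lx; apply: fP.
have [_ eq_fL] := uniq_min_size uniq_fL sub_fL (eq_leq (esym (size_map f L))).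
have /mapP [x Lx ->] : y \in map f L by rewrite eq_fL memL.
by exists x; rewrite -?memL.
Qed.

Lemma Sh_perm n v w : Sh n v w -> perm_eq w (nseq (n - size v) 0 ++ v).
Proof. by case/and3P => _ /eqP <- /eqP <-; rewrite perm_sym perm_zeros_Pos. Qed.

Lemma Sh_F3 n v w : Sh n v w -> Sh n v (F3 w).
Proof. by rewrite /Sh size_F3 zero_F3 Pos_F3. Qed.

Theorem theorem1p2 (v : seq nat) (n : nat) :
  v != [::] -> all (fun x => 0 < x) v -> size v <= n ->
  [/\ (forall w, Sh n v w -> Sh n v (F3 w)),
      {in Sh n v &, injective F3},
      (forall w', Sh n v w' -> exists2 w, Sh n v w & F3 w = w') &
      (forall w, Sh n v w -> maj w = mafz (F3 w) /\ last 0 w = last 0 (F3 w))].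
Proof.
move=> _ _ _; split.
- exact: Sh_F3.
- exact: in2W F3_inj.
- apply: (@inj_in_onto _ _ (permutations (nseq (n - size v) 0 ++ v))).
  + by move=> w /Sh_perm; rewrite mem_permutations.
  + by move=> w; apply: Sh_F3.
  + exact: in2W F3_inj.
- by move=> w _; rewrite maj_mafz_F3 last_F3.
Qed.
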